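(* Let $a,b$ be integers with $0<b<a$, let $S=\langle a,a+1,\ldots,a+b\rangle$ with conductor $c$, and let $m\ge 2c-1$. Let $0=i_0<i_1<\cdots<i_t<a+b$ be integers. Then $$\sharp\mathrm D(m,m+i_1,\ldots,m+i_t)\ge\sharp\mathrm D(m,m+1,\ldots,m+t).$$
   Context: The conductor $c$ of a numerical semigroup $S$ is the least element of $S$ with $c+n\in S$ for all $n\in\mathbb N$. For $x\in S$, $\mathrm D(x)=\{\alpha\in S\mid x-\alpha\in S\}$, and $\mathrm D(x_1,\ldots,x_t)=\mathrm D(x_1)\cup\cdots\cup\mathrm D(x_t)$. *)

From mathcomp Require Import all_boot.
Set Implicit Arguments. Unset Strict Implicit. Unset Printing Implicit Defensive.

(* Coefficients can be bounded by x
   (when a > 0; bounding never changes the set since a zero generator adds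
   nothing), which makes this a decidable (boolean) predicate. *)
Definition inS (a b x : nat) : bool :=
  [exists f : {ffun 'I_b.+1 -> 'I_x.+1},
     \sum_(j < b.+1) (f j : nat) * (a + j) == x].

Definition is_conductor (a b c : nat) : Prop :=
  [/\ inS a b c, (forall n, inS a b (c + n)) &
      (forall c', inS a b c' -> (forall n, inS a b (c' + n)) -> c <= c')].

(* All its elements are bounded
   by the max of the x_k, so we count it inside 'I_(max+1). *)
Definition Dset (a b : nat) (xs : seq nat) : {set 'I_(\max_(x <- xs) x).+1} :=
  [set al : 'I_(\max_(x <- xs) x).+1 |
     inS a b al && has (fun x => (al <= x) && inS a b (x - al)) xs].

Definition Dcard (a b : nat) (xs : seq nat) : nat := #|Dset a b xs|.

From mathcomp Require Import all_boot zify.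

Set Implicit Arguments.
Unset Strict Implicit.
Unset Printing Implicit Defensive.

(* For m >= 2c - 1, every element of S below m + 1 - c lies in D(m) and every
   alpha >= m + 1 - c lies in S.  Writing alpha = m + e - y with e = i_t, such an
   alpha lies in D(m + i_0, ..., m + i_t) iff y is covered by a shift
   d = e - i_k, i.e. d <= y and y - d is in S.  Hence
     #D = #{alpha in S | alpha < m + 1 - c} + c + e - #{y < c | y uncovered},
   and it suffices to show that the offsets i_k leave at most e - t more
   uncovered y than the offsets 0, 1, ..., t.
   As S is the union of the intervals [ka, k(a+b)], y = k(a+b) + r with
   1 <= r <= a + b is uncovered iff r + kb < a and no shift lies in [r, r + kb]
   (a hole of level k at r).  Holes above e are the same for both offset sets.
   Below e, the holes of level 0 avoid the t positive shifts, so there are at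
   most e - t of them; for the holes of level k + 1 below e with maximum r0, the
   holes, the positive shifts and the shift-free interval (r0, r0 + (k+1)b] are
   disjoint in [1, e], which bounds them by the holes of level k of 0, ..., t. *)

Lemma card_ord_count n (p : pred nat) : #|[set x : 'I_n | p x]| = count p (iota 0 n).
Proof.
rewrite -val_enum_ord count_map cardsE cardE /enum_mem -enumT size_filter.
by rewrite [in RHS](@eq_filter _ _ predT) ?filter_predT.
Qed.

Lemma rev_iota lo n : rev (iota lo n) = [seq lo + n - 1 - y | y <- iota 0 n].
Proof.
elim: n => // n IHn.
rewrite -addn1 iotaD /= cats1 rev_rcons IHn addn1 /= -[1]/(1 + 0) iotaDl -map_comp.
by congr (_ :: _); [lia | apply: eq_map => y /=; lia].
Qed.

Lemma count_iota_trunc (p : pred nat) lo n n' :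
  (forall x, p x -> x < lo + n) -> n <= n' -> count p (iota lo n') = count p (iota lo n).
Proof.
move=> p_lt le_nn'; rewrite -(subnKC le_nn') iotaD count_cat -[RHS]addn0; congr (_ + _).
apply/eqP; rewrite -leqn0 leqNgt -has_count; apply/hasP => [[x]].
by rewrite mem_iota => /andP [lo_x _] /p_lt; lia.
Qed.

Lemma leq_count_iota (p : pred nat) lo n lo' n' :
  lo <= lo' -> lo' + n' <= lo + n -> (forall x, lo' <= x < lo' + n' -> p x) ->
  n' <= count p (iota lo n).
Proof.
move=> le_lo le_hi p_in; rewrite -size_filter -[n'](size_iota lo').
apply: uniq_leq_size => [|x]; first exact: iota_uniq.
rewrite mem_iota mem_filter mem_iota => x_in; rewrite p_in //; lia.
Qed.

Lemma count_predU_disjoint (T : Type) (p q : pred T) s :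
  (forall x, p x -> ~~ q x) -> count (predU p q) s = count p s + count q s.
Proof.
move=> pq; elim: s => //= x s ->; case px: (p x) => /=; last lia.
by rewrite (negbTE (pq x px)); lia.
Qed.

Section IntervalSemigroup.
Variables a b : nat.

Lemma inS0 : inS a b 0.
Proof.
apply/existsP; exists [ffun => ord0]; apply/eqP.
by rewrite big1 // => j _; rewrite ffunE.
Qed.

Lemma inS_bounds x : inS a b x -> exists k, k * a <= x <= k * (a + b).
Proof.
case/existsP=> f /eqP <-; exists (\sum_(j < b.+1) (f j : nat)).
rewrite !big_distrl /=; apply/andP; split; apply: leq_sum => j _; rewrite leq_mul2l.
  by rewrite leq_addr orbT.
by rewrite leq_add2l -ltnS ltn_ord orbT.
Qed.

Section PositiveGenerator.
Hypothesis a_gt0 : 0 < a.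

Lemma inS_add_gen x j : j <= b -> inS a b x -> inS a b (x + (a + j)).
Proof.
move=> le_jb /existsP [f /eqP f_sum]; apply/existsP.
pose j0 : 'I_b.+1 := Ordinal (le_jb : j < b.+1).
exists [ffun j' => inord (f j' + (j' == j0)) : 'I_(x + (a + j)).+1]; apply/eqP.
rewrite (eq_bigr (fun j' => f j' * (a + j') + (j' == j0) * (a + j'))); last first.
  move=> j' _; rewrite ffunE inordK ?mulnDl //; have := ltn_ord (f j').
  case: (j' == j0) => /=; lia.
rewrite big_split /= f_sum (bigD1 j0) //= eqxx big1 ?addn0 ?mul1n //.
by move=> j' /negbTE ->.
Qed.

Lemma inS_between k x : k * a <= x <= k * (a + b) -> inS a b x.
Proof.
elim: k x => [|k IHk] x.
  by rewrite !mul0n leqn0 => /andP [_ /eqP ->]; apply: inS0.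
rewrite !mulSn => /andP [lo hi]; set j := minn (x - (a + k * a)) b.
have -> : x = (x - (a + j)) + (a + j) by rewrite /j; lia.
apply: inS_add_gen; first exact: geq_minr.
apply: IHk; move: lo hi; rewrite /j mulnDr; lia.
Qed.

Lemma inSP x : reflect (exists k, k * a <= x <= k * (a + b)) (inS a b x).
Proof. by apply: (iffP idP) => [/inS_bounds | [k /inS_between]]. Qed.

Lemma block_diff_inS k r d : 1 <= r -> r + k * b < a -> d < a + b ->
  (d <= k * (a + b) + r) && inS a b (k * (a + b) + r - d) = (r <= d <= r + k * b).
Proof.
move=> r_gt0 r_lt d_lt; rewrite mulnDr; apply/idP/idP.
  case/andP=> le_d /inSP [j /andP [lo hi]]; rewrite mulnDr in hi.
  case: (ltngtP j k) => [lt_jk | lt_kj | eq_jk]; last by subst j; lia.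
    have : j.+1 * (a + b) <= k * (a + b) by rewrite leq_mul2r lt_jk orbT.
    rewrite mulSn !mulnDr; lia.
  have : k.+1 * a <= j * a by rewrite leq_mul2r lt_kj orbT.
  rewrite mulSn; lia.
case/andP=> lo hi; apply/andP; split; first lia.
apply/inSP; exists k; rewrite mulnDr; lia.
Qed.

End PositiveGenerator.

Definition covered (ds : seq nat) (y : nat) : bool :=
  has (fun d => (d <= y) && inS a b (y - d)) ds.

Lemma covered_inS ds y : 0 \in ds -> inS a b y -> covered ds y.
Proof. by move=> ds0 yS; apply/hasP; exists 0; rewrite ?subn0. Qed.

Section Conductor.
Variable c : nat.
Hypothesis conductor_ge : forall n, inS a b (c + n).

Lemma inS_ge_conductor y : c <= y -> inS a b y.
Proof. by move=> le_cy; rewrite -(subnKC le_cy). Qed.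

Lemma uncovered_lt_conductor ds : 0 \in ds -> forall y, ~~ covered ds y -> y < c.
Proof.
move=> ds0 y; apply: contraR; rewrite -leqNgt => /inS_ge_conductor yS.
by apply/hasP; exists 0; rewrite ?subn0.
Qed.

Variable m : nat.
Hypothesis m_large : 2 * c <= m + 1.

Lemma Dcard_offsetsE (os : seq nat) (e : nat) :
  0 \in os -> e \in os -> {in os, forall o, o <= e} ->
  Dcard a b [seq m + o | o <- os] + count (predC (covered [seq e - o | o <- os])) (iota 0 c)
  = count (inS a b) (iota 0 (m + 1 - c)) + (c + e).
Proof.
move=> os0 ose le_e; set ds := [seq e - o | o <- os].
have ds0 : 0 \in ds by apply/mapP; exists e; rewrite ?subnn.
pose inD al := inS a b al && has (fun x => (al <= x) && inS a b (x - al)) [seq m + o | o <- os].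
have me_in : m + e \in [seq m + o | o <- os] by apply: map_f.
rewrite /Dcard /Dset (card_ord_count _ inD) (@count_iota_trunc inD 0 (m + e).+1); first last.
- by rewrite ltnS (leq_bigmax_seq _ me_in).
- move=> al /andP [_ /hasP [_ /mapP [o /le_e le_oe ->] /andP [le_al _]]]; lia.
rewrite (_ : (m + e).+1 = (m + 1 - c) + (c + e)); last lia.
rewrite iotaD count_cat add0n -(count_rev _ (iota (m + 1 - c) _)) rev_iota count_map.
have m_in : m \in [seq m + o | o <- os] by apply/mapP; exists 0; rewrite ?addn0.
have low : count inD (iota 0 (m + 1 - c)) = count (inS a b) (iota 0 (m + 1 - c)).
  apply: eq_in_count => al; rewrite mem_iota => /andP [_ al_lt] /=.
  rewrite /inD andb_idr // => _; apply/hasP; exists m => //.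
  by rewrite inS_ge_conductor ?andbT; lia.
have high : {in iota 0 (c + e), preim (fun y => m + 1 - c + (c + e) - 1 - y) inD
    =1 covered ds}.
  move=> y; rewrite mem_iota => /andP [_ y_lt] /=.
  rewrite (_ : m + 1 - c + (c + e) - 1 - y = m + e - y); last lia.
  rewrite /inD inS_ge_conductor /=; last lia.
  rewrite /covered !has_map; apply: eq_in_has => o /le_e le_oe /=.
  rewrite (_ : (m + e - y <= m + o) = (e - o <= y)); last by apply/idP/idP; lia.
  case: leqP => //= le_y; congr (inS a b _); lia.
rewrite low (eq_in_count high) -[c + e in RHS](size_iota 0) -(count_predC (covered ds)).
rewrite -addnA (@count_iota_trunc (predC _) 0 c) ?leq_addr // => y /(uncovered_lt_conductor ds0).
by rewrite add0n.
Qed.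

End Conductor.

Definition hole (ds : seq nat) (k r : nat) : bool :=
  (r + k * b < a) && ~~ has (fun d => r <= d <= r + k * b) ds.

Section Blocks.
Variable ds : seq nat.
Hypotheses (a_gt0 : 0 < a) (ds0 : 0 \in ds) (ds_lt : {in ds, forall d, d < a + b}).

Lemma covered_block k r : 1 <= r <= a + b ->
  covered ds (k * (a + b) + r) = ~~ hole ds k r.
Proof.
case/andP=> r_gt0 r_le; rewrite /hole; case: ltnP => [r_lt | r_ge] /=.
  by rewrite negbK; apply: eq_in_has => d /ds_lt; exact: (block_diff_inS a_gt0).
rewrite covered_inS //; apply/(inSP a_gt0); exists k.+1; rewrite !mulSn mulnDr; lia.
Qed.

Lemma count_uncovered_blocks K :
  count (predC (covered ds)) (iota 0 (K * (a + b)).+1)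
  = \sum_(0 <= k < K) count (hole ds k) (iota 1 (a + b)).
Proof.
elim: K => [|K IHK].
  by rewrite big_geq //= covered_inS // inS0.
rewrite big_nat_recr // -IHK (_ : (K.+1 * (a + b)).+1 = (K * (a + b)).+1 + (a + b)).
  rewrite iotaD count_cat add0n -addn1 iotaDl count_map; congr (_ + _).
  by apply: eq_in_count => r; rewrite mem_iota /= => r_in; rewrite covered_block //; lia.
by rewrite mulSn; lia.
Qed.

Lemma count_uncovered_conductor c : (forall n, inS a b (c + n)) ->
  count (predC (covered ds)) (iota 0 c)
  = \sum_(0 <= k < c) count (hole ds k) (iota 1 (a + b)).
Proof.
move=> conductor_ge; rewrite -count_uncovered_blocks (@count_iota_trunc _ 0 c) //.
  by move=> y /(uncovered_lt_conductor conductor_ge ds0).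
by rewrite ltnW // ltnS leq_pmulr // ltn_addr.
Qed.

End Blocks.

Section Comparison.
Variables (t e : nat) (ds ids : seq nat).
Hypotheses (ds_uniq : uniq ds) (size_ds : size ds = t.+1) (ds0 : 0 \in ds)
  (dse : e \in ds) (ds_le : {in ds, forall d, d <= e}) (e_lt : e < a + b)
  (mem_ids : forall d : nat, (d \in ids) = (d <= t)).

Let is_shift (d : nat) : bool := d \in ds.

Lemma size_shifts_le : t <= e.
Proof.
rewrite -ltnS -size_ds -[e.+1](size_iota 0); apply: uniq_leq_size => // d d_in.
by rewrite mem_iota ltnS ds_le.
Qed.

Lemma count_shifts_pos : t <= count is_shift (iota 1 e).
Proof.
rewrite -size_filter -[t]/(t.+1.-1) -size_ds -(size_rem ds0).
apply: uniq_leq_size => [|d]; first exact: rem_uniq.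
rewrite (mem_rem_uniq _ ds_uniq) mem_filter mem_iota inE => /andP [d_neq0 d_in] /=.
by rewrite /is_shift d_in lt0n d_neq0 add1n ltnS (ds_le d_in).
Qed.

Lemma hole_ids k r : hole ids k r = (r + k * b < a) && (t < r).
Proof.
rewrite /hole [t < r]ltnNge; congr (_ && ~~ _); apply/hasP/idP => [[d] | r_le].
  by rewrite mem_ids => d_le /andP [r_d _]; apply: leq_trans d_le.
by exists r; rewrite ?mem_ids // leqnn leq_addr.
Qed.

Lemma count_hole_high k n :
  count (hole ds k) (iota e.+1 n) = count (hole ids k) (iota e.+1 n).
Proof.
apply: eq_in_count => r; rewrite mem_iota => /andP [e_lt_r _].
have no_shift : ~~ has (fun d => r <= d <= r + k * b) ds.
  by apply/hasPn => d /ds_le d_le; apply/nandP; left; rewrite -ltnNge; lia.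
by rewrite hole_ids /hole no_shift (leq_ltn_trans size_shifts_le e_lt_r) !andbT.
Qed.

Lemma count_hole0_low : count (hole ds 0) (iota 1 e) + t <= e.
Proof.
have : count (hole ds 0) (iota 1 e) <= count (predC is_shift) (iota 1 e).
  apply: sub_count => r /andP [_]; apply: contra => r_in.
  by apply/hasP; exists r; rewrite ?mul0n ?addn0 ?leqnn.
have := count_predC is_shift (iota 1 e); have := count_shifts_pos.
rewrite size_iota; lia.
Qed.

Lemma count_holeS_low k :
  count (hole ds k.+1) (iota 1 e) <= count (hole ids k) (iota 1 e).
Proof.
set H := hole ds k.+1.
have ids_holes : minn e (a - 1 - k * b) - t <= count (hole ids k) (iota 1 e).
  have t_le_e := size_shifts_le.
  apply: (@leq_count_iota _ _ _ t.+1) => [||r r_in]; [lia | lia |].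
  by rewrite hole_ids; apply/andP; split; lia.
case: (posnP (count H (iota 1 e))) => [-> // | H_pos].
pose P r := H r && (r <= e).
have exP : exists r, P r.
  move: H_pos; rewrite -has_count => /hasP [r]; rewrite mem_iota => r_in Hr.
  by exists r; rewrite /P Hr; lia.
have P_le r : P r -> r <= e by case/andP.
have [r0 /andP [/andP [_ /hasPn no_shift] r0_le] r0_max] := ex_maxnP exP P_le.
have r0_gap : r0 + k.+1 * b < e.
  by move: (no_shift e dse); rewrite r0_le /= -ltnNge.
pose J r := r0 < r <= r0 + k.+1 * b.
have H_off r : H r -> ~~ is_shift r.
  case/andP=> _; apply: contra => r_in.
  by apply/hasP; exists r; rewrite ?leqnn ?leq_addr.
have J_off r : predU H is_shift r -> ~~ J r.
  case/orP=> [Hr | r_in]; apply/negP => /andP [r0_lt r_le].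
    by have := r0_max r; rewrite /P Hr /=; lia.
  by move: (no_shift r r_in); rewrite r_le (ltnW r0_lt).
have J_size : k.+1 * b <= count J (iota 1 e).
  by apply: (@leq_count_iota _ _ _ r0.+1) => [||r r_in]; rewrite /J; lia.
have := count_size (predU (predU H is_shift) J) (iota 1 e).
rewrite !count_predU_disjoint // size_iota.
have := count_shifts_pos; move: ids_holes r0_gap J_size; rewrite mulSn; lia.
Qed.

Lemma sum_count_holes K :
  \sum_(0 <= k < K) count (hole ds k) (iota 1 (a + b))
  <= \sum_(0 <= k < K) count (hole ids k) (iota 1 (a + b)) + (e - t).
Proof.
have split_at_e (p : pred nat) :
    count p (iota 1 (a + b)) = count p (iota 1 e) + count p (iota e.+1 (a + b - e)).
  by rewrite -count_cat -iotaD subnKC // ltnW.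
under eq_bigr do rewrite split_at_e.
under [X in _ <= X + _]eq_bigr do rewrite split_at_e -count_hole_high.
rewrite !big_split /=.
suff : \sum_(0 <= k < K) count (hole ds k) (iota 1 e)
    <= \sum_(0 <= k < K) count (hole ids k) (iota 1 e) + (e - t) by lia.
case: K => [|K]; first by rewrite big_geq.
rewrite big_nat_recl // [X in _ <= X + _]big_nat_recr //=.
have : \sum_(0 <= k < K) count (hole ds k.+1) (iota 1 e)
    <= \sum_(0 <= k < K) count (hole ids k) (iota 1 e).
  by apply: leq_sum => k _; apply: count_holeS_low.
have := count_hole0_low; lia.
Qed.

End Comparison.

End IntervalSemigroup.

Lemma Dcard_le_offsets (a b c m t e : nat) (os : seq nat) :
  0 < a -> (forall n, inS a b (c + n)) -> 2 * c <= m + 1 ->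
  uniq os -> size os = t.+1 -> 0 \in os -> e \in os -> {in os, forall o, o <= e} ->
  e < a + b ->
  Dcard a b [seq m + o | o <- iota 0 t.+1] <= Dcard a b [seq m + o | o <- os].
Proof.
move=> a_gt0 conductor_ge m_large os_uniq size_os os0 ose os_le e_lt.
set ds := [seq e - o | o <- os]; set ids := [seq t - o | o <- iota 0 t.+1].
have ds0 : 0 \in ds by apply/mapP; exists e; rewrite ?subnn.
have dse : e \in ds by apply/mapP; exists 0; rewrite ?subn0.
have ds_le : {in ds, forall d, d <= e} by move=> _ /mapP [o _ ->]; apply: leq_subr.
have ds_uniq : uniq ds.
  by rewrite map_inj_in_uniq // => x y /os_le ? /os_le ? /=; lia.
have size_ds : size ds = t.+1 by rewrite size_map.
have mem_ids (d : nat) : (d \in ids) = (d <= t).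
  apply/mapP/idP => [[o _ ->] | d_le]; first exact: leq_subr.
  by exists (t - d); rewrite ?mem_iota ?subKn //; lia.
have ds_lt : {in ds, forall d, d < a + b}.
  by move=> d /ds_le /leq_ltn_trans; apply.
have ids0 : 0 \in ids by rewrite mem_ids.
have t_le_e := size_shifts_le ds_uniq size_ds ds_le.
have ids_lt : {in ids, forall d, d < a + b}.
  by move=> d; rewrite mem_ids => d_le; apply: leq_ltn_trans (leq_trans d_le t_le_e) e_lt.
have iota_le : {in iota 0 t.+1, forall o, o <= t} by move=> o; rewrite mem_iota.
have := Dcard_offsetsE conductor_ge m_large os0 ose os_le.
have iota0 : 0 \in iota 0 t.+1 by rewrite mem_iota.
have iota_t : t \in iota 0 t.+1 by rewrite mem_iota leqnn.
have := Dcard_offsetsE conductor_ge m_large iota0 iota_t iota_le.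
rewrite -/ds -/ids (count_uncovered_conductor a_gt0 ds0 ds_lt conductor_ge).
rewrite (count_uncovered_conductor a_gt0 ids0 ids_lt conductor_ge).
have := sum_count_holes ds_uniq size_ds ds0 dse ds_le e_lt mem_ids c.
lia.
Qed.

Theorem lemma4p12 (a b c m t : nat) (i : nat -> nat) :
  0 < b -> b < a -> is_conductor a b c -> 2 * c <= m + 1 ->
  i 0 = 0 -> (forall k, k < t -> i k < i k.+1) -> i t < a + b ->
  Dcard a b [seq m + k | k <- iota 0 t.+1]
    <= Dcard a b [seq m + i k | k <- iota 0 t.+1].
Proof.
move=> b_gt0 b_lt_a [_ conductor_ge _] m_large i0 i_incr it_lt.
have i_mono : {in [pred k | k <= t] &, {homo i : j k / j < k}}.
  apply: (homo_ltn_in (@ltn_trans)) => [j k _ k_le l /andP [_ /ltnW l_le] | j _].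
    exact: leq_trans l_le k_le.
  exact: i_incr.
have -> : [seq m + i k | k <- iota 0 t.+1] = [seq m + o | o <- map i (iota 0 t.+1)].
  by rewrite -map_comp.
apply: (Dcard_le_offsets (e := i t)) => //; first lia.
- rewrite map_inj_in_uniq ?iota_uniq // => j k.
  rewrite !mem_iota !ltnS => j_le k_le.
  case: (ltngtP j k) => // [jk | kj] eq_i.
    by move: (i_mono j k j_le k_le jk); rewrite eq_i ltnn.
  by move: (i_mono k j k_le j_le kj); rewrite eq_i ltnn.
- by rewrite size_map size_iota.
- by apply/mapP; exists 0; rewrite ?mem_iota ?i0.
- by apply/mapP; exists t; rewrite ?mem_iota ?leqnn.
- move=> o /mapP [k]; rewrite mem_iota /= ltnS => k_le ->.
  case: (ltngtP k t) => [kt | | ->] //; last by rewrite ltnNge k_le.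
  exact: ltnW (i_mono k t k_le (leqnn t) kt).
Qed.
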